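(* There exist $d\ge1$, a partition of $\{1,\dots,d\}$ into sets $\mathcal{D},\mathcal{U}$, a causal graph with contribution matrix $\mathbb{C}$, cost weights $c\in\mathbb{R}^d$ with $c_f>0$, an exponent $p\ge1$, a deficit $\alpha>0$ and $\beta\in(0,1)$ such that the set $$\mathcal{H}=\{h_0\in\mathbb{R}^d:\ \mathbb{C}h_0\ge0\ \text{and every optimal solution of } \min_{e\ge0}\Big(\sum_f c_fe_f^{\,p}\Big)^{1/p}\ \text{s.t.}\ (\mathbb{C}h_0)^\top e\ge\alpha\ \text{is }\beta\text{-desirable}\}$$ of $\beta$-desirable classifiers is not convex.
   Context: A causal graph is a weighted directed acyclic graph on $\{1,\dots,d\}$ with adjacency matrix $A$ ($A_{ij}$ the weight of edge $i\to j$, $0$ if absent); its contribution matrix is $\mathbb{C}=\sum_{k=0}^{d}A^k$. $\mathcal{D}$ is the set of desirable features and $\mathcal{U}$ the set of undesirable features. An effort profile $e$ is $\beta$-desirable if $\|e_{\mathcal{D}}\|_2\ge\beta\|e\|_2$, where $e_{\mathcal{D}}$ is the restriction of $e$ to coordinates in $\mathcal{D}$. *)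

From HB Require Import structures.
From mathcomp Require Import all_boot all_order all_algebra.
From mathcomp Require Import reals exp Rstruct.
From Stdlib Require Import Rdefinitions.
Set Implicit Arguments. Unset Strict Implicit. Unset Printing Implicit Defensive.
Import Order.TTheory GRing.Theory Num.Theory.
Local Open Scope ring_scope.

Definition Rr : realType := Rdefinitions.R.

Definition edge d (A : 'M[Rr]_d) : rel 'I_d := fun i j => A i j != 0.

Definition acyclic d (A : 'M[Rr]_d) : Prop :=
  forall (x : 'I_d) (s : seq 'I_d), path (edge A) x s -> last x s = x -> s = [::].

Definition contribution d (A : 'M[Rr]_d) : 'M[Rr]_d :=
  \sum_(k < d.+1) A ^+ k.

Definition norm2_on d (S : {set 'I_d}) (e : 'cV[Rr]_d) : Rr :=
  Num.sqrt (\sum_(i in S) e i 0 ^+ 2).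
Definition norm2 d (e : 'cV[Rr]_d) : Rr := Num.sqrt (\sum_i e i 0 ^+ 2).

Definition desirable d (D : {set 'I_d}) (beta : Rr) (e : 'cV[Rr]_d) : Prop :=
  norm2_on D e >= beta * norm2 e.

Definition cost d (c : 'I_d -> Rr) (p : Rr) (e : 'cV[Rr]_d) : Rr :=
  powR (\sum_f c f * powR (e f 0) p) p^-1.

Definition feasible d (C : 'M[Rr]_d) (alpha : Rr) (h0 e : 'cV[Rr]_d) : Prop :=
  (forall f, 0 <= e f 0) /\ alpha <= \sum_f (C *m h0) f 0 * e f 0.

Definition optimal d (C : 'M[Rr]_d) (c : 'I_d -> Rr) (p alpha : Rr)
  (h0 e : 'cV[Rr]_d) : Prop :=
  feasible C alpha h0 e /\
  forall e', feasible C alpha h0 e' -> cost c p e <= cost c p e'.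

Definition Hset d (D : {set 'I_d}) (C : 'M[Rr]_d) (c : 'I_d -> Rr)
  (p alpha beta : Rr) (h0 : 'cV[Rr]_d) : Prop :=
  (forall f, 0 <= (C *m h0) f 0) /\
  forall e, optimal C c p alpha h0 e -> desirable D beta e.

Definition convex_pred d (P : 'cV[Rr]_d -> Prop) : Prop :=
  forall (x y : 'cV[Rr]_d) (t : Rr), P x -> P y -> 0 <= t <= 1 ->
    P (t *: x + (1 - t) *: y).

(** With unit weights and [p = 1] the cost is the l1 norm, so an optimal effort
    puts all its mass on the coordinates where [C h0] is largest.  Take three
    features, no edges (so [C = 1]), [D = {0, 1}] and [U = {2}].  For
    [h0 = (2, 0, 1)] and [h0 = (0, 2, 1)] the undesirable coordinate is beaten
    by a desirable one, so every optimal effort is desirable; at their midpoint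
    [(1, 1, 1)] the effort concentrated on the undesirable feature is optimal. *)
From HB Require Import structures.
From mathcomp Require Import all_boot all_order all_algebra.
From mathcomp Require Import reals exp Rstruct.
From mathcomp Require Import lra.
Set Implicit Arguments.
Unset Strict Implicit.
Unset Printing Implicit Defensive.

Import Order.TTheory GRing.Theory Num.Theory.
Local Open Scope ring_scope.

Lemma contribution0 d : contribution (0 : 'M[Rr]_d) = 1.
Proof.
rewrite /contribution big_ord_recl expr0 big1 ?addr0 // => k _.
by rewrite expr0n.
Qed.

Lemma acyclic0 d : acyclic (0 : 'M[Rr]_d).
Proof. by move=> x [|y s] //= /andP[]; rewrite /edge mxE eqxx. Qed.

Lemma sumr_mul_indicator d (F : 'I_d -> Rr) k :
  \sum_f F f * (f == k)%:R = F k.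
Proof.
rewrite (bigD1 k) //= eqxx mulr1 big1 ?addr0 // => f /negbTE->.
by rewrite mulr0.
Qed.

Lemma scale_delta_colE d (a : Rr) (k i : 'I_d) :
  (a *: delta_mx k 0 : 'cV_d) i 0 = a * (i == k)%:R.
Proof. by rewrite [LHS]mxE [delta_mx _ _ _ _]mxE andbT. Qed.

Section UnitLinearCost.

Variables (d : nat) (C : 'M[Rr]_d) (alpha : Rr) (h0 : 'cV[Rr]_d).

Local Notation g f := ((C *m h0) f 0).
Local Notation unit_optimal := (optimal C (fun _ => 1) 1 alpha h0).

Lemma cost_unit1 (e : 'cV[Rr]_d) :
  (forall f, 0 <= e f 0) -> cost (fun _ => 1) 1 e = \sum_f e f 0.
Proof.
move=> e_ge0; rewrite /cost invr1 powRr1; last first.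
  by apply: sumr_ge0 => f _; rewrite mul1r powRr1.
by apply: eq_bigr => f _; rewrite mul1r powRr1.
Qed.

(* Moving the mass of [e] from [j] to [k], rescaled by [g j / g k], keeps the
   return and saves a fraction [1 - g j / g k] of it. *)
Lemma unit_optimal_off_argmax e j k :
  unit_optimal e -> 0 <= g j < g k -> e j 0 = 0.
Proof.
move=> [[e_ge0 e_feas] e_min] /andP[gj_ge0 gjk].
have gk_gt0 : 0 < g k by apply: le_lt_trans gjk.
have jk : (j == k) = false by apply/negbTE; apply: contraTneq gjk => ->; rewrite ltxx.
set r := g j / g k.
have r_ge0 : 0 <= r by rewrite divr_ge0 // ltW.
have r_lt1 : r < 1 by rewrite ltr_pdivrMr // mul1r.
pose e' := \col_f (e f 0 + e j 0 * (r * (f == k)%:R - (f == j)%:R)).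
have shift w : \sum_f w f * e' f 0 = \sum_f w f * e f 0 + e j 0 * (r * w k - w j).
  under eq_bigr do rewrite mxE mulrDr.
  rewrite big_split /=; congr (_ + _).
  under eq_bigr do rewrite mulrCA mulrBr mulrCA.
  by rewrite -mulr_sumr sumrB -mulr_sumr !sumr_mul_indicator.
have e'_ge0 f : 0 <= e' f 0.
  rewrite mxE; have [->|fj] := eqVneq f j.
    by rewrite jk /= mulr0 sub0r mulrN1 subrr.
  rewrite /= subr0; apply: addr_ge0 (e_ge0 f) _.
  by rewrite (mulr_ge0 (e_ge0 j)) // mulr_ge0.
have e'_feas : feasible C alpha h0 e'.
  split=> //; rewrite (shift (fun f => g f)) /r divfK ?gt_eqF //.
  by rewrite subrr mulr0 addr0.
have := e_min e' e'_feas.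
rewrite !cost_unit1 // -(eq_bigr _ (fun f _ => mul1r (e' f 0))) shift.
rewrite (eq_bigr _ (fun f _ => mul1r (e f 0))) !mulr1.
have := e_ge0 j; nra.
Qed.

Lemma unit_optimal_argmax k : 0 <= alpha -> 0 < g k -> (forall f, g f <= g k) ->
  unit_optimal ((alpha / g k) *: delta_mx k 0).
Proof.
move=> alpha_ge0 gk_gt0 gk_max.
set e := _ *: _.
have eE f : e f 0 = alpha / g k * (f == k)%:R by rewrite scale_delta_colE.
have e_ge0 f : 0 <= e f 0.
  by rewrite eE mulr_ge0 // divr_ge0 // ltW.
have e_return : \sum_f g f * e f 0 = alpha.
  under eq_bigr do rewrite eE mulrCA.
  by rewrite -mulr_sumr sumr_mul_indicator mulfVK ?gt_eqF.
split; first by split=> //; rewrite e_return.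
move=> e' [e'_ge0 e'_feas].
rewrite !cost_unit1 //.
under eq_bigr do rewrite eE.
rewrite sumr_mul_indicator ler_pdivrMr //.
apply: (le_trans e'_feas).
rewrite mulr_suml; apply: ler_sum => f _.
by rewrite mulrC; apply: ler_wpM2l.
Qed.

End UnitLinearCost.

Section Desirability.

Variables (d : nat) (D : {set 'I_d}).

Lemma norm2_on_supported (e : 'cV[Rr]_d) :
  (forall i, i \notin D -> e i 0 = 0) -> norm2_on D e = norm2 e.
Proof.
move=> e_supp; rewrite /norm2_on /norm2 big_mkcond; congr Num.sqrt.
by apply: eq_bigr => i _; case: ifPn => // /e_supp->; rewrite expr0n.
Qed.

Lemma desirable_supported beta (e : 'cV[Rr]_d) :
  beta <= 1 -> (forall i, i \notin D -> e i 0 = 0) -> desirable D beta e.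
Proof.
move=> beta_le1 e_supp; rewrite /desirable norm2_on_supported //.
exact: ler_piMl (sqrtr_ge0 _) beta_le1.
Qed.

Lemma not_desirable_off beta (e : 'cV[Rr]_d) k :
  0 < beta -> (forall i, i \in D -> e i 0 = 0) -> e k 0 != 0 -> ~ desirable D beta e.
Proof.
move=> beta_gt0 e_offD ek_neq0; rewrite /desirable /norm2_on big1; last first.
  by move=> i /e_offD->; rewrite expr0n.
rewrite sqrtr0 leNgt pmulr_rgt0 // sqrtr_gt0; apply/negP; rewrite negbK.
rewrite (bigD1 k) //=; apply: ltr_pwDl; first by rewrite lt0r sqrf_eq0 ek_neq0 sqr_ge0.
by apply: sumr_ge0 => i _; exact: sqr_ge0.
Qed.

End Desirability.

Section UnitLinearHset.

Variables (d : nat) (D : {set 'I_d}) (C : 'M[Rr]_d) (alpha beta : Rr).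

Local Notation g h0 f := ((C *m h0) f 0).
Local Notation H := (Hset D C (fun _ => 1) 1 alpha beta).

Lemma Hset_unit1_dominated h0 : beta <= 1 -> (forall f, 0 <= g h0 f) ->
  (forall j, j \notin D -> exists k, g h0 j < g h0 k) -> H h0.
Proof.
move=> beta_le1 g_ge0 g_dom; split=> // e e_opt.
apply: desirable_supported => // j /g_dom[k gjk].
by apply: (unit_optimal_off_argmax (k := k) e_opt); rewrite g_ge0.
Qed.

Lemma not_Hset_unit1_undesirable_argmax h0 k : 0 < alpha -> 0 < beta ->
  k \notin D -> 0 < g h0 k -> (forall f, g h0 f <= g h0 k) -> ~ H h0.
Proof.
move=> alpha_gt0 beta_gt0 kD gk_gt0 gk_max [_ H_des].
have := H_des _ (unit_optimal_argmax (ltW alpha_gt0) gk_gt0 gk_max).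
apply: (not_desirable_off _ (k := k)) => // [i iD|].
  have ik : i != k by apply: contraTneq iD => ->.
  by rewrite scale_delta_colE (negbTE ik) mulr0.
by rewrite scale_delta_colE eqxx mulr1 mulf_neq0 ?invr_eq0 ?gt_eqF.
Qed.

End UnitLinearHset.

Definition D3 : {set 'I_3} := [set i | i != ord_max].

Definition col3 (a b c : Rr) : 'cV[Rr]_3 := \col_(i < 3) nth 0 [:: a; b; c] i.

Lemma col3_ge0 a b c : 0 <= a -> 0 <= b -> 0 <= c -> forall f, 0 <= col3 a b c f 0.
Proof. by move=> a_ge0 b_ge0 c_ge0 [[|[|[|]]] //] ?; rewrite mxE. Qed.

Lemma col3_midpoint : (1/2) *: col3 2 0 1 + (1 - 1/2) *: col3 0 2 1 = col3 1 1 1.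
Proof. by apply/matrixP => -[[|[|[|]]] //] ? ?; rewrite !mxE /=; lra. Qed.

Local Notation H3 := (Hset D3 (contribution 0) (fun _ => 1) 1 1 (1/2)).

Lemma notin_D3 (j : 'I_3) : j \notin D3 -> j = ord_max.
Proof. by rewrite !inE negbK => /eqP. Qed.

Lemma H3_left : H3 (col3 2 0 1).
Proof.
rewrite contribution0; apply: Hset_unit1_dominated => [||j /notin_D3->].
- lra.
- by move=> f; rewrite mul1mx; apply: col3_ge0.
- by exists ord0; rewrite mul1mx !mxE /=; lra.
Qed.

Lemma H3_right : H3 (col3 0 2 1).
Proof.
rewrite contribution0; apply: Hset_unit1_dominated => [||j /notin_D3->].
- lra.
- by move=> f; rewrite mul1mx; apply: col3_ge0.
- by exists (inord 1); rewrite mul1mx !mxE inordK //=; lra.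
Qed.

Lemma not_H3_center : ~ H3 (col3 1 1 1).
Proof.
rewrite contribution0; apply: (not_Hset_unit1_undesirable_argmax (k := ord_max)).
- lra.
- lra.
- by rewrite !inE negbK.
- by rewrite mul1mx mxE /=; lra.
- by move=> -[[|[|[|]]] //] ?; rewrite mul1mx !mxE.
Qed.

Theorem lemma3 :
  exists (d : nat) (D : {set 'I_d}) (A : 'M[Rr]_d) (c : 'I_d -> Rr)
         (p alpha beta : Rr),
    (1 <= d)%N /\ D != set0 /\ ~: D != set0 /\ acyclic A /\
    (forall f, 0 < c f) /\
    1 <= p /\ 0 < alpha /\ 0 < beta < 1 /\
    ~ convex_pred (Hset D (contribution A) c p alpha beta).
Proof.
exists 3%N, D3, 0, (fun _ => 1), 1, 1, (1/2).
split=> //; split; first by apply/set0Pn; exists ord0; rewrite !inE.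
split; first by apply/set0Pn; exists ord_max; rewrite !inE negbK.
split; first exact: acyclic0.
split; first by move=> _; exact: ltr01.
split; first exact: lexx.
split; first exact: ltr01.
split; first by apply/andP; split; lra.
move=> H3_convex; apply: not_H3_center; rewrite -col3_midpoint.
by apply: H3_convex; [exact: H3_left | exact: H3_right | apply/andP; split; lra].
Qed.
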